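(* Let $n>1$ and $m\geq 1$ be integers with $m\leq n$. Then $\operatorname{ecc}_{Z_{n,m}}(0)=\lfloor\frac{n(m+1)}{2}\rfloor$, i.e. the maximum graph distance in $Z_{n,m}$ from the all-zero vertex $0$ to any vertex equals $\lfloor\frac{n(m+1)}{2}\rfloor$.
   Context: Elements of $\mathbb{Z}_n$ are identified with their representatives in $\{0,\dots,n-1\}$. The dYoke graph $Z_{n,m}$ has as vertices all $u=(u_0,\dots,u_{m+1})\in\mathbb{Z}_n\times\{-1,0,1\}^m\times\mathbb{Z}_n$ with $\sum_{i=0}^{m+1}u_i\equiv0\pmod n$; $u,v$ are adjacent if there is $0\leq i\leq m$ such that $u_j=v_j$ for all $j\notin\{i,i+1\}$ and either ($u_i=v_i+1$, $u_{i+1}=v_{i+1}-1$) or ($u_i=v_i-1$, $u_{i+1}=v_{i+1}+1$), arithmetic in coordinates $0,m+1$ being in $\mathbb{Z}_n$ and in coordinates $1,\dots,m$ in $\mathbb{Z}$. $0$ denotes the vertex $(0,\dots,0)$. *)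

From mathcomp Require Import all_boot all_order all_algebra.
Set Implicit Arguments. Unset Strict Implicit. Unset Printing Implicit Defensive.
Import Order.TTheory GRing.Theory Num.Theory.
Local Open Scope ring_scope.

(* A vertex of Z_{n,m} is represented by the sequence of integers
   [u_0; u_1; ...; u_m; u_{m+1}], where the Z_n-coordinates u_0, u_{m+1}
   are represented by their representatives in {0,...,n-1}. *)
Definition dyoke_vertex (n m : nat) (u : seq int) : Prop :=
  [/\ size u = m.+2,
      0 <= nth 0 u 0 < n%:Z,
      0 <= nth 0 u m.+1 < n%:Z,
      (forall i : nat, (1 <= i <= m)%N -> -1 <= nth 0 u i <= 1)
    & ((\sum_(x <- u) x) = 0 %[mod n%:Z])%Z ].

Definition coord_eq (n m j : nat) (a b : int) : Prop :=
  if (j == 0)%N || (j == m.+1)%N then (a = b %[mod n%:Z])%Z else a = b.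

Definition dyoke_adj (n m : nat) (u v : seq int) : Prop :=
  dyoke_vertex n m u /\ dyoke_vertex n m v /\
  exists i : nat, (i <= m)%N /\
    (forall j : nat, j != i -> j != i.+1 -> nth 0 u j = nth 0 v j) /\
    ((coord_eq n m i (nth 0 u i) (nth 0 v i + 1) /\
      coord_eq n m i.+1 (nth 0 u i.+1) (nth 0 v i.+1 - 1)) \/
     (coord_eq n m i (nth 0 u i) (nth 0 v i - 1) /\
      coord_eq n m i.+1 (nth 0 u i.+1) (nth 0 v i.+1 + 1))).

Definition dyoke_zero (m : nat) : seq int := nseq m.+2 0.

Fixpoint dyoke_walk (n m : nat) (x : seq int) (p : seq (seq int)) : Prop :=
  match p with
  | [::] => dyoke_vertex n m x
  | y :: p' => dyoke_adj n m x y /\ dyoke_walk n m y p'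
  end.

Definition dist_le (n m : nat) (u v : seq int) (k : nat) : Prop :=
  exists p : seq (seq int), dyoke_walk n m u p /\ last u p = v /\ (size p <= k)%N.

Definition is_dist (n m : nat) (u v : seq int) (d : nat) : Prop :=
  dist_le n m u v d /\ (forall k : nat, dist_le n m u v k -> (d <= k)%N).

Definition is_ecc (n m : nat) (x : seq int) (e : nat) : Prop :=
  [/\ dyoke_vertex n m x,
      (forall v, dyoke_vertex n m v -> exists d, is_dist n m x v d /\ (d <= e)%N)
    & exists v, dyoke_vertex n m v /\ is_dist n m x v e ].

From mathcomp Require Import all_boot all_order all_algebra.
From mathcomp Require Import zify ring.
From Stdlib Require Import Classical.
Set Implicit Arguments. Unset Strict Implicit. Unset Printing Implicit Defensive.
Import Order.TTheory GRing.Theory Num.Theory.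

(* A vertex u of Z_{n,m} is determined by its partial sums P_j = u_0 + ... + u_j
   (j <= m): they form a walk with steps in {-1, 0, 1} starting in [0, n), and
   every such walk comes from a vertex, whose last coordinate is -P_m mod n.
   An edge at position i changes P_i by 1, up to a common shift of all P_j by a
   multiple of n.  Hence the distance from 0 to u is the minimum over k of
   sum_j |P_j - k n|: one edge changes this quantity by at most 1, and moving
   an extreme P_j one step towards k n keeps the steps small and lowers it by 1.
   If some P_j is a multiple k n, the sum for this k is at most
   sum_j |j - j_0| <= m (m + 1) / 2 <= n (m + 1) / 2; otherwise all P_j lie
   strictly between 0 and n, and the sums for k = 0 and k = 1 add up to
   n (m + 1).  The walk P_j = floor(n/2) + [n and j odd] attains
   floor(n (m + 1) / 2) for every k. *)

Local Open Scope ring_scope.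

Section Walks.

Variables n m : nat.

Lemma dyoke_walk_rcons x p y : dyoke_walk n m x p ->
  dyoke_adj n m (last x p) y -> dyoke_walk n m x (rcons p y).
Proof.
elim: p x => [|z p IH] x /=; first by move=> _ hadj; split; last case: hadj => _ [].
by case=> hxz hw hadj; split; last exact: IH.
Qed.

Lemma dist_le_rcons x y z k : dist_le n m x y k -> dyoke_adj n m y z ->
  dist_le n m x z k.+1.
Proof.
case=> p [hw [<- hk]] hadj; exists (rcons p z).
by rewrite last_rcons size_rcons; split; first exact: dyoke_walk_rcons.
Qed.

Lemma dist_le_weaken x y k k' : (k <= k')%N -> dist_le n m x y k -> dist_le n m x y k'.
Proof. by move=> hk [p [hw [hl hp]]]; exists p; do 2?split => //; exact: leq_trans hk. Qed.

Lemma dist_le_is_dist x y k : dist_le n m x y k ->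
  exists d, is_dist n m x y d /\ (d <= k)%N.
Proof.
elim: k {-2}k (leqnn k) => [|K IH] k hkK hk.
  by move: hkK hk; rewrite leqn0 => /eqP -> hk; exists 0%N; do 2?split.
have [[k' [lt_k'k hk']]|no_shorter] :=
  classic (exists k', (k' < k)%N /\ dist_le n m x y k').
  have [|d [hd le_dk']] := IH k' _ hk'; first lia.
  by exists d; split => //; lia.
exists k; split => //; split => // k' hk'; rewrite leqNgt; apply/negP => lt_k'k.
by apply: no_shorter; exists k'.
Qed.

End Walks.

Definition prefix_sum (u : seq int) (j : nat) : int := \sum_(t < j.+1) nth 0 u t.

Definition unit_steps (m : nat) (P : nat -> int) : Prop :=
  forall t : nat, (0 < t <= m)%N -> -1 <= P t - P t.-1 <= 1.

Definition path_increment (m : nat) (P : nat -> int) (j : nat) : int :=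
  if j == 0%N then P 0%N else if (j <= m)%N then P j - P j.-1 else - P m.

Definition reduce_coord (n m j : nat) (a : int) : int :=
  if (j == 0%N) || (j == m.+1) then (a %% n%:Z)%Z else a.

Definition path_vertex (n m : nat) (P : nat -> int) : seq int :=
  mkseq (fun j => reduce_coord n m j (path_increment m P j)) m.+2.

Lemma size_path_vertex n m P : size (path_vertex n m P) = m.+2.
Proof. exact: size_mkseq. Qed.

Lemma nth_path_vertex n m P j : (j < m.+2)%N ->
  nth 0 (path_vertex n m P) j = reduce_coord n m j (path_increment m P j).
Proof. exact: nth_mkseq. Qed.

Lemma prefix_sum0 u : prefix_sum u 0 = nth 0 u 0.
Proof. by rewrite /prefix_sum big_ord1. Qed.

Lemma prefix_sumS u j : prefix_sum u j.+1 = prefix_sum u j + nth 0 u j.+1.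
Proof. by rewrite /prefix_sum big_ord_recr. Qed.

Lemma sum_prefix_sum m u : size u = m.+2 ->
  \sum_(x <- u) x = prefix_sum u m + nth 0 u m.+1.
Proof. by move=> su; rewrite (big_nth 0) su big_mkord big_ord_recr. Qed.

Lemma prefix_sum_path_vertex n m P j : (j <= m)%N ->
  prefix_sum (path_vertex n m P) j = P j - (P 0%N %/ n%:Z)%Z * n%:Z.
Proof.
elim: j => [|j IH] hj.
  by rewrite prefix_sum0 nth_path_vertex // /reduce_coord /path_increment /= modzE.
rewrite prefix_sumS IH ?(ltnW hj) // nth_path_vertex; last lia.
rewrite /reduce_coord /path_increment /= hj.
have -> : (j.+1 == m.+1) = false by apply/eqP; lia.
ring.
Qed.

Lemma prefix_sum_path_vertex_small n m P j : 0 <= P 0%N < n%:Z -> (j <= m)%N ->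
  prefix_sum (path_vertex n m P) j = P j.
Proof. by move=> hP0 le_jm; rewrite prefix_sum_path_vertex // divz_small // mul0r subr0. Qed.

Lemma dyoke_vertex_path_vertex n m P : (0 < n)%N -> unit_steps m P ->
  dyoke_vertex n m (path_vertex n m P).
Proof.
move=> n_gt0 hP; split.
- exact: size_path_vertex.
- rewrite nth_path_vertex // /reduce_coord /=; lia.
- rewrite nth_path_vertex // /reduce_coord /= eqxx; lia.
- move=> i /andP[i_gt0 le_im]; rewrite nth_path_vertex; last lia.
  rewrite /reduce_coord /path_increment le_im.
  have [-> ->] : (i == 0%N) = false /\ (i == m.+1) = false by split; apply/eqP; lia.
  by apply: hP; rewrite i_gt0.
- rewrite (sum_prefix_sum (size_path_vertex n m P)) prefix_sum_path_vertex //.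
  rewrite nth_path_vertex // /reduce_coord /path_increment /= eqxx ltnn /=.
  rewrite modzDmr.
  have -> : P m - (P 0%N %/ n)%Z * n - P m = (- (P 0%N %/ n)%Z) * n%:Z by ring.
  by rewrite modzMl mod0z.
Qed.

Lemma prefix_sum_unit_steps n m u : dyoke_vertex n m u -> unit_steps m (prefix_sum u).
Proof.
case=> _ _ _ hmid _ [//|t] /= le_tm.
by rewrite prefix_sumS addrAC subrr add0r; apply: hmid.
Qed.

Lemma path_vertex_prefix_sum n m u : dyoke_vertex n m u ->
  path_vertex n m (prefix_sum u) = u.
Proof.
case=> su hu0 hum _ hsum; apply: (@eq_from_nth _ 0); first by rewrite size_path_vertex.
rewrite size_path_vertex => -[|j] lt_jm;
  rewrite nth_path_vertex // /reduce_coord /path_increment /=.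
  by rewrite prefix_sum0 modz_small.
case: (ltnP j m) => [lt_jm1|le_mj].
  have -> : (j.+1 == m.+1) = false by apply/eqP; lia.
  by rewrite prefix_sumS; ring.
have -> : j = m by lia.
rewrite eqxx.
have -> : - prefix_sum u m = nth 0 u m.+1 - (\sum_(x <- u) x).
  by rewrite (sum_prefix_sum su); ring.
by rewrite -modzDmr -modzNm hsum mod0z mod0z subr0 modz_small.
Qed.

Definition shift_at (P : nat -> int) (i : nat) (s : int) : nat -> int :=
  fun j => if j == i then P j - s else P j.

Lemma path_increment_shift_at m P i s j : (i <= m)%N -> (j < m.+2)%N ->
  path_increment m (shift_at P i s) j =
  path_increment m P j - (if j == i then s else 0) + (if j == i.+1 then s else 0).
Proof.
by move=> le_im lt_jm; rewrite /path_increment /shift_at; repeat case: ifP; move=> *; lia.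
Qed.

Lemma coord_eq_reduce n m j (a c : int) :
  coord_eq n m j (reduce_coord n m j (a + c)) (reduce_coord n m j a + c).
Proof.
by rewrite /coord_eq /reduce_coord; case: (_ || _) => //; rewrite modz_mod modzDml.
Qed.

Lemma path_vertex_shift_adj n m P i s : (0 < n)%N -> (i <= m)%N -> (s = 1 \/ s = -1) ->
  unit_steps m P -> unit_steps m (shift_at P i s) ->
  dyoke_adj n m (path_vertex n m (shift_at P i s)) (path_vertex n m P).
Proof.
move=> n_gt0 le_im hs hP hP'; split; first exact: dyoke_vertex_path_vertex.
split; first exact: dyoke_vertex_path_vertex.
have nth_shift j : (j < m.+2)%N -> nth 0 (path_vertex n m (shift_at P i s)) j =
    reduce_coord n m j (path_increment m P j
      - (if j == i then s else 0) + (if j == i.+1 then s else 0)).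
  by move=> lt_jm; rewrite nth_path_vertex // path_increment_shift_at.
exists i; split => //; split => [j ne_ji ne_ji1|].
  case: (ltnP j m.+2) => [lt_jm|le_mj]; last by rewrite !nth_default ?size_path_vertex.
  by rewrite nth_shift // nth_path_vertex // (negbTE ne_ji) (negbTE ne_ji1) subr0 addr0.
rewrite !nth_shift ?ltnS ?(leqW le_im) // !eqxx !nth_path_vertex ?ltnS ?(leqW le_im) //.
have [-> ->] : (i == i.+1) = false /\ (i.+1 == i) = false by split; apply/eqP; lia.
rewrite subr0 addr0.
by case: hs => ->; [right | left; rewrite opprK]; split; apply: coord_eq_reduce.
Qed.

Definition deviation (m : nat) (P : nat -> int) (c : int) : nat :=
  \sum_(j < m.+1) `|P j - c|%N.

Lemma deviation_split m P c j (lt_jm : (j < m.+1)%N) :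
  deviation m P c = (`|P j - c| + \sum_(k < m.+1 | k != Ordinal lt_jm) `|P k - c|)%N.
Proof. by rewrite /deviation (bigD1 (Ordinal lt_jm)). Qed.

Lemma deviation_ext m P Q c : (forall j, (j <= m)%N -> P j = Q j) ->
  deviation m P c = deviation m Q c.
Proof. by move=> eqPQ; apply: eq_bigr => j _; rewrite eqPQ // -ltnS. Qed.

Lemma deviation0 m P c : deviation m P c = 0%N -> forall j, (j <= m)%N -> P j = c.
Proof.
move=> h0 j le_jm; move: h0; rewrite (deviation_split P c (le_jm : (j < m.+1)%N)); lia.
Qed.

Lemma deviation_shift_at m P c j s : (j <= m)%N -> (s = 1 \/ s = -1) ->
  0 < s * (P j - c) -> (deviation m (shift_at P j s) c).+1 = deviation m P c.
Proof.
move=> le_jm hs hpos; have lt_jm : (j < m.+1)%N by [].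
rewrite !(deviation_split _ c lt_jm).
have -> : (\sum_(k < m.+1 | k != Ordinal lt_jm) `|shift_at P j s k - c|)%N =
          (\sum_(k < m.+1 | k != Ordinal lt_jm) `|P k - c|)%N.
  by apply: eq_bigr => k ne_kj; rewrite /shift_at ifN.
rewrite /shift_at eqxx.
by case: hs hpos => -> hpos; lia.
Qed.

Lemma shift_at_unit_steps m P c j s : unit_steps m P -> (j <= m)%N ->
  (s = 1 \/ s = -1) -> 0 < s * (P j - c) ->
  (forall t, (t <= m)%N -> `|P t - c| <= `|P j - c|)%N ->
  unit_steps m (shift_at P j s).
Proof.
move=> hP le_jm hs hpos jmax t ht; have := hP t ht.
have /andP[_ le_tm] := ht; have := jmax t le_tm.
have := jmax t.-1 (leq_trans (leq_pred t) le_tm).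
rewrite /shift_at; case: ifP => /eqP e1; case: ifP => /eqP e2; try subst j;
  case: hs hpos => -> hpos; lia.
Qed.

Lemma path_vertex_const n m P (k : int) : (forall j, (j <= m)%N -> P j = k * n%:Z) ->
  path_vertex n m P = dyoke_zero m.
Proof.
move=> hP; apply: (@eq_from_nth _ 0); first by rewrite size_path_vertex size_nseq.
rewrite size_path_vertex => j lt_jm; rewrite nth_path_vertex // nth_nseq lt_jm.
rewrite /reduce_coord /path_increment; case: j lt_jm => [|j] lt_jm /=.
  by rewrite hP // modzMl.
case: (ltnP j m) => [lt_jm1|le_mj].
  have -> : (j.+1 == m.+1) = false by apply/eqP; lia.
  by rewrite hP // hP ?(ltnW lt_jm1) // subrr.
have -> : j = m by lia.
by rewrite eqxx hP // -mulNr modzMl.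
Qed.

Lemma dyoke_zero_vertex n m : (0 < n)%N -> dyoke_vertex n m (dyoke_zero m).
Proof.
move=> n_gt0; rewrite -(@path_vertex_const n m (fun=> 0) 0) => [|j _]; last by rewrite mul0r.
by apply: dyoke_vertex_path_vertex => // t _; rewrite subrr.
Qed.

Lemma dist_le_path_vertex n m P (k : int) : (0 < n)%N -> unit_steps m P ->
  dist_le n m (dyoke_zero m) (path_vertex n m P) (deviation m P (k * n%:Z)).
Proof.
move=> n_gt0; set c := k * n%:Z.
move hN : (deviation m P c) => N; elim: N P hN => [|N IH] P hN hP.
  rewrite (path_vertex_const (deviation0 hN)).
  by exists [::]; split => //; exact: dyoke_zero_vertex.
have [j _ jmax] := @arg_maxnP _ ord0 xpredT (fun t : 'I_m.+1 => `|P t - c|%N) isT.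
have le_jm : (j <= m)%N := ltn_ord j.
have {}jmax t : (t <= m)%N -> (`|P t - c| <= `|P j - c|)%N.
  by move=> le_tm; exact: (jmax (Ordinal (le_tm : (t < m.+1)%N))).
have Pj_neq_c : P j - c != 0.
  apply: contra_eqN hN => /eqP Pj_eq_c; rewrite /deviation big1 // => t _.
  by have := jmax t (ltn_ord t); rewrite Pj_eq_c; lia.
pose s : int := if 0 < P j - c then 1 else -1.
have hs : s = 1 \/ s = -1 by rewrite /s; case: ifP; [left | right].
have s_pos : 0 < s * (P j - c) by move: Pj_neq_c; rewrite /s; case: ifP; lia.
have hP' := shift_at_unit_steps hP le_jm hs s_pos jmax.
apply: (dist_le_rcons (IH (shift_at P j s) _ hP')).
  by apply/eqP; rewrite -eqSS -hN (deviation_shift_at le_jm hs s_pos).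
exact: path_vertex_shift_adj.
Qed.

Lemma coord_eq_inner n m j a b : (0 < j <= m)%N -> coord_eq n m j a b -> a = b.
Proof. by move=> hj; rewrite /coord_eq ifN //; apply/norP; split; apply/eqP; lia. Qed.

Lemma eqz_modP (a b d : int) : (a = b %[mod d])%Z -> exists c : int, b - a = c * d.
Proof. by move/eqP; rewrite eq_sym eqz_mod_dvd => /dvdzP. Qed.

Lemma dyoke_adj_prefix_sum n m u w : dyoke_adj n m u w ->
  exists i (c d : int), [/\ (i <= m)%N, `|d| <= 1 &
    forall j, (j <= m)%N ->
      prefix_sum w j = prefix_sum u j + c * n%:Z + (if j == i then d else 0)].
Proof.
case=> _ [_ [i [le_im [heq halt]]]].
have [s [hs hui hui1]] : exists s : int, [/\ s = 1 \/ s = -1,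
    coord_eq n m i (nth 0 u i) (nth 0 w i + s) &
    coord_eq n m i.+1 (nth 0 u i.+1) (nth 0 w i.+1 - s)].
  case: halt => -[h1 h2]; first by exists 1; split; first left.
  by exists (-1); rewrite opprK; split; first right.
have [c hc] : exists c : int, nth 0 w 0 - nth 0 u 0 = c * n%:Z - (if i == 0%N then s else 0).
  case: (i =P 0%N) hui => [-> /eqz_modP [c hc]|ne_i0 _]; first by exists c; rewrite -hc; ring.
  by exists 0; rewrite heq ?mul0r ?subrr ?subr0 //; lia.
have hinner t : (0 < t <= m)%N ->
    nth 0 w t - nth 0 u t = (if t == i.+1 then s else 0) - (if t == i then s else 0).
  move=> ht; case: (t =P i) ht => [-> ht|/eqP ne_ti ht].
    have -> : (i == i.+1) = false by apply/eqP; lia.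
    by rewrite (coord_eq_inner ht hui); ring.
  case: (t =P i.+1) ht => [-> ht|/eqP ne_ti1 _].
    by rewrite (coord_eq_inner ht hui1); ring.
  by rewrite heq // subrr.
exists i, c, (- s); split => //; first by case: hs => ->.
elim=> [|j IH] le_jm; first by rewrite !prefix_sum0 eq_sym; case: (i == 0%N) in hc *; lia.
rewrite !prefix_sumS IH ?(ltnW le_jm) //; have := hinner j.+1 le_jm; rewrite eqSS.
by do 2 case: eqP => _; lia.
Qed.

Lemma deviation_adj n m u w (k : int) : dyoke_adj n m u w ->
  exists k' : int, (deviation m (prefix_sum w) (k' * n%:Z)
                    <= (deviation m (prefix_sum u) (k * n%:Z)).+1)%N.
Proof.
case/dyoke_adj_prefix_sum => i [c [d [le_im hd hw]]]; exists (k + c).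
have lt_im : (i < m.+1)%N by [].
rewrite !(deviation_split _ _ lt_im).
have -> : (\sum_(j < m.+1 | j != Ordinal lt_im) `|(prefix_sum w j - (k + c) * n%:Z)%R|)%N =
          (\sum_(j < m.+1 | j != Ordinal lt_im) `|(prefix_sum u j - k * n%:Z)%R|)%N.
  apply: eq_bigr => j ne_ji; rewrite hw ?ifN //; first by congr absz; ring.
  by rewrite -ltnS.
rewrite hw // eqxx.
have -> : prefix_sum u i + c * n%:Z + d - (k + c) * n%:Z = prefix_sum u i - k * n%:Z + d.
  by ring.
by move: (prefix_sum u i - k * n%:Z) (\sum_(j < m.+1 | _) _)%N => x S; lia.
Qed.

Lemma deviation_walk n m x p (k : int) : dyoke_walk n m x p ->
  exists k' : int, (deviation m (prefix_sum (last x p)) (k' * n%:Z)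
                    <= deviation m (prefix_sum x) (k * n%:Z) + size p)%N.
Proof.
elim: p x k => [|y p IH] x k /=; first by exists k; rewrite addn0.
case=> /(deviation_adj k) [k1 hk1] /(IH _ k1) [k2 hk2].
by exists k2; rewrite addnS -addSn (leq_trans hk2) ?leq_add2r.
Qed.

Lemma prefix_sum_dyoke_zero m j : prefix_sum (dyoke_zero m) j = 0.
Proof. by rewrite /prefix_sum big1 // => t _; rewrite nth_nseq if_same. Qed.

Lemma dist_le_deviation n m v L : dist_le n m (dyoke_zero m) v L ->
  exists k : int, (deviation m (prefix_sum v) (k * n%:Z) <= L)%N.
Proof.
case=> p [hw [<- le_pL]]; have [k hk] := deviation_walk 0 hw.
exists k; apply: leq_trans hk _.
rewrite /deviation big1 ?add0n // => j _.
by rewrite prefix_sum_dyoke_zero mul0r subrr.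
Qed.

Lemma unit_steps_dist m P i j : unit_steps m P -> (i <= m)%N -> (j <= m)%N ->
  (`|P j - P i| <= `|j%:Z - i%:Z|)%N.
Proof.
move=> hP.
suff mono a b : (a <= b <= m)%N -> (`|P b - P a| <= b - a)%N.
  move=> le_im le_jm; case: (leqP i j) => [le_ij|lt_ji].
    by have := mono i j; rewrite le_ij le_jm => /(_ isT); lia.
  by have := mono j i; rewrite (ltnW lt_ji) le_im => /(_ isT); lia.
elim: b => [|b IH] /andP[le_ab le_bm].
  by move: le_ab; rewrite leqn0 => /eqP ->; rewrite subrr.
case: (ltngtP a b.+1) le_ab => // [lt_ab|->] _; last by rewrite subrr.
have /IH IHb : (a <= b <= m)%N by rewrite -ltnS lt_ab ltnW.
have /= := hP b.+1 le_bm.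
by move: IHb; move: (P b.+1) (P b) (P a) => x y z; lia.
Qed.

Lemma sum_distn_le M j0 : (j0 <= M)%N ->
  (2 * \sum_(j < M.+1) `|j%:Z - j0%:Z| <= M * M.+1)%N.
Proof.
elim: M j0 => [|M IH] j0 le_j0M.
  by rewrite big_ord1; move: le_j0M; rewrite leqn0 => /eqP ->.
rewrite big_ord_recr /=; case: (leqP j0 M) => [le_j0M'|lt_Mj0].
  by have := IH j0 le_j0M'; move: (\sum_(i < M.+1) _)%N => S; nia.
have -> : j0 = M.+1 by lia.
rewrite (eq_bigr (fun j : 'I_M.+1 => `|j%:Z - M%:Z| + 1)%N); last first.
  by move=> j _; have := ltn_ord j; lia.
rewrite big_split /= sum1_card card_ord.
by have := IH M (leqnn M); move: (\sum_(i < M.+1) _)%N => S; nia.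
Qed.

Lemma deviation_at_value m P j0 : unit_steps m P -> (j0 <= m)%N ->
  (2 * deviation m P (P j0) <= m * m.+1)%N.
Proof.
move=> hP le_j0m; apply: leq_trans (sum_distn_le le_j0m).
by rewrite leq_mul2l /=; apply: leq_sum => j _; exact: (unit_steps_dist hP le_j0m (ltn_ord j)).
Qed.

Lemma deviation_0_add_n m n P : (forall j, (j <= m)%N -> 0 < P j < n%:Z) ->
  (deviation m P 0 + deviation m P n%:Z = n * m.+1)%N.
Proof.
move=> hP; rewrite /deviation -big_split /= (eq_bigr (fun=> n)).
  by rewrite sum_nat_const card_ord mulnC.
by move=> j _; have := hP j (ltn_ord j); lia.
Qed.

Lemma exists_small_deviation n m P : (m <= n)%N -> unit_steps m P ->
  0 <= P 0%N < n%:Z -> exists k : int, (2 * deviation m P (k * n%:Z) <= n * m.+1)%N.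
Proof.
move=> le_mn hP hP0.
have [/existsP [j0 /dvdzP [k hk]]|] := boolP [exists j : 'I_m.+1, (n%:Z %| P j)%Z].
  exists k; rewrite -hk; apply: leq_trans (deviation_at_value hP (ltn_ord j0)) _.
  by rewrite leq_mul2r le_mn orbT.
rewrite negb_exists => /forallP no_multiple.
have off_multiples j : (j <= m)%N -> P j != 0 /\ P j != n%:Z.
  move=> le_jm; have ndvd := no_multiple (Ordinal (le_jm : (j < m.+1)%N)).
  by split; apply: contraNneq ndvd => /= ->; rewrite ?dvdz0 ?dvdzz.
have inside j : (j <= m)%N -> 0 < P j < n%:Z.
  elim: j => [|j IH] le_jm; have [/eqP ne0 /eqP nen] := off_multiples _ le_jm; first lia.
  have := IH (ltnW le_jm); have /= := hP j.+1 le_jm; lia.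
have := deviation_0_add_n inside.
set d0 := deviation m P 0; set dn := deviation m P n%:Z.
by case: (leqP d0 dn) => h sum_0_n; [exists 0 | exists 1];
  rewrite ?mul0r ?mul1r -/d0 -/dn; lia.
Qed.

Definition far_path (n j : nat) : int := (n./2 + (odd n && odd j))%N%:Z.

Lemma far_path_unit_steps n m : unit_steps m (far_path n).
Proof.
by move=> t _; rewrite /far_path; case: (odd n); case: (odd t); case: (odd t.-1); lia.
Qed.

Lemma sum_odd M : (\sum_(j < M) odd j)%N = M./2.
Proof. by elim: M => [|M IH]; rewrite ?big_ord0 // big_ord_recr /= IH; lia. Qed.

Lemma sum_far_path n m : (\sum_(j < m.+1) `|far_path n j|)%N = ((n * m.+1) %/ 2)%N.
Proof.
rewrite (eq_bigr (fun j : 'I_m.+1 => n./2 + odd n * odd j))%N; last first.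
  by move=> j _; rewrite /far_path; case: (odd n); case: (odd j).
rewrite big_split /= sum_nat_const card_ord -big_distrr /= sum_odd.
by have := odd_double_half n; have := odd_double_half m.+1; nia.
Qed.

Lemma far_path_deviation n m (k : int) :
  ((n * m.+1) %/ 2 <= deviation m (far_path n) (k * n%:Z))%N.
Proof.
have far_le j : (`|far_path n j| <= n)%N.
  by rewrite /far_path; have := odd_double_half n; case: (odd n); case: (odd j); lia.
case: (lerP k 0) => hk.
  have : k * n%:Z <= 0 by nia.
  rewrite -sum_far_path; move: (k * n%:Z) => c hc; apply: leq_sum => j _.
  by move: (far_le j); rewrite /far_path; lia.
have : n%:Z <= k * n%:Z by nia.
move: (k * n%:Z) => c hc; apply: (@leq_trans (\sum_(j < m.+1) (n - `|far_path n j|))%N).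
  have : (\sum_(j < m.+1) (n - `|far_path n j|) + \sum_(j < m.+1) `|far_path n j|
           = n * m.+1)%N.
    rewrite -big_split (eq_bigr (fun=> n)); last by move=> j _; apply: subnK; exact: far_le.
    by rewrite sum_nat_const card_ord mulnC.
  by rewrite sum_far_path; move: (\sum_(j < m.+1) (n - _))%N => S; lia.
apply: leq_sum => j _; move: (far_le j); rewrite /far_path; lia.
Qed.

Lemma dist_le_zero_half n m v : (0 < n)%N -> (m <= n)%N -> dyoke_vertex n m v ->
  dist_le n m (dyoke_zero m) v ((n * (m + 1)) %/ 2).
Proof.
move=> n_gt0 le_mn hv; have hP := prefix_sum_unit_steps hv.
have hP0 : 0 <= prefix_sum v 0 < n%:Z by rewrite prefix_sum0; case: hv.
have [k hk] := exists_small_deviation le_mn hP hP0.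
rewrite -(path_vertex_prefix_sum hv); apply: dist_le_weaken (dist_le_path_vertex k n_gt0 hP).
by rewrite addn1; move: hk; set d := deviation _ _ _; lia.
Qed.

Lemma far_vertex_dist_ge n m L : (0 < n)%N ->
  dist_le n m (dyoke_zero m) (path_vertex n m (far_path n)) L ->
  ((n * (m + 1)) %/ 2 <= L)%N.
Proof.
move=> n_gt0 /dist_le_deviation [k]; apply: leq_trans.
have far0 : 0 <= far_path n 0 < n%:Z.
  by rewrite /far_path andbF addn0; have := odd_double_half n; lia.
rewrite (deviation_ext _ (fun j => prefix_sum_path_vertex_small (j := j) far0)) addn1.
exact: far_path_deviation.
Qed.

Local Close Scope ring_scope.
Unset Implicit Arguments.

Theorem theorem5p17 (n m : nat) :
  (1 < n)%N -> (1 <= m)%N -> (m <= n)%N ->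
  is_ecc n m (dyoke_zero m) ((n * (m + 1)) %/ 2).
Proof.
move=> n_gt1 _ le_mn; have n_gt0 : (0 < n)%N by lia.
split; first exact: dyoke_zero_vertex.
  by move=> v hv; apply: dist_le_is_dist; exact: dist_le_zero_half.
have far_vertex := dyoke_vertex_path_vertex n_gt0 (@far_path_unit_steps n m).
exists (path_vertex n m (far_path n)); split=> //; split; first exact: dist_le_zero_half.
by move=> L; exact: far_vertex_dist_ge.
Qed.
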